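(* Let $L\in\mathbb N$, $L\ge2$, ${\bf A}\in\mathbb R^{M\times N}$, ${\bf b}\in\mathbb R^M$ with ${\bf b}\neq0$, and assume $S_+=\{{\bf z}\ge0:{\bf A}{\bf z}={\bf b}\}$ is non-empty. Let $(r,{\bf u})$ follow the weight-normalized gradient flow with learning rates $\eta_r(t)=r(t)^2$, $\eta_{\bf u}=1$, with $r(0)>0$, ${\bf u}(0)>0$, $\|{\bf u}(0)\|_2=1$, and put ${\bf x}=\frac{r}{\|{\bf u}\|_2}{\bf u}$. Then $\lim_{t\to\infty}\mathcal L({\bf x}(t))=0$.
   Context: $\odot$ denotes entrywise power; vector inequalities are entrywise. Loss: $\mathcal L({\bf x})=\frac{1}{2L}\|{\bf A}{\bf x}^{\odot L}-{\bf b}\|_2^2$. Weight-normalized loss $\tilde{\mathcal L}(r,{\bf u})=\mathcal L\big(\frac{r}{\|{\bf u}\|_2}{\bf u}\big)$. Weight-normalized gradient flow: $\partial_t r=-\eta_r\nabla_r\tilde{\mathcal L}(r,{\bf u})$, $\partial_t{\bf u}=-\eta_{\bf u}\nabla_{\bf u}\tilde{\mathcal L}(r,{\bf u})$, $r(0)=r_0$, ${\bf u}(0)={\bf u}_0$. *)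

From HB Require Import structures.
From mathcomp Require Import all_boot all_order all_algebra.
From mathcomp Require Import all_classical all_reals all_analysis.
Set Implicit Arguments. Unset Strict Implicit. Unset Printing Implicit Defensive.
Import Order.TTheory GRing.Theory Num.Theory.
Import numFieldNormedType.Exports.
Local Open Scope ring_scope.

Definition norm2 {R : realType} {n : nat} (v : 'cV[R]_n) : R :=
  Num.sqrt (\sum_(i < n) (v i 0) ^+ 2).

Definition epow {R : realType} {n : nat} (x : 'cV[R]_n) (L : nat) : 'cV[R]_n :=
  map_mx (fun a => a ^+ L) x.

Definition loss {R : realType} {M N : nat} (L : nat) (A : 'M[R]_(M, N))
  (b : 'cV[R]_M) (x : 'cV[R]_N) : R :=
  (2 * L%:R)^-1 * (norm2 (A *m epow x L - b)) ^+ 2.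

Definition wn_x {R : realType} {N : nat} (r : R) (u : 'cV[R]_N) : 'cV[R]_N :=
  (r / norm2 u) *: u.

Definition wn_loss {R : realType} {M N : nat} (L : nat) (A : 'M[R]_(M, N))
  (b : 'cV[R]_M) (r : R) (u : 'cV[R]_N) : R :=
  loss L A b (wn_x r u).

Definition is_grad {R : realType} {N : nat} (F : 'cV[R]_N -> R)
  (v g : 'cV[R]_N) : Prop :=
  forall i : 'I_N, is_derive v (delta_mx i 0 : 'cV[R]_N) F (g i 0).

(* With [eta_r = r^2], the norm of [u] stays 1 (the [u]-gradient is orthogonal to [u]) and
   [x = r u] solves the time-rescaled gradient flow [x' = - ||x||^2 grad L(x)].  Fix [z] in
   [S_+] and let [phi' = y^(1-L)]; along the flow the function
   [D(x) = sum_j (x_j^2 / 2 - z_j phi(x_j))] has derivative [- ||x||^2 * 2L * L(x) <= 0].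
   Since [D] is bounded below and [phi] tends to [-oo] at 0, the entries of [x] on the support
   of [z] stay above some [d > 0], so [||x||^2 >= d^2].  The loss is nonincreasing, and if it
   stayed above some [e > 0] then [D] would decrease at least linearly, contradicting its
   lower bound. *)

From HB Require Import structures.
From mathcomp Require Import all_boot all_order all_algebra.
From mathcomp Require Import all_classical all_reals all_analysis.
From mathcomp Require Import ring lra zify.
Import Order.TTheory GRing.Theory Num.Theory.
Import numFieldNormedType.Exports.
Local Open Scope classical_set_scope.
Local Open Scope ring_scope.
Set Implicit Arguments. Unset Strict Implicit. Unset Printing Implicit Defensive.

Section RealCalculus.
Variable R : realType.
Implicit Types (f g : R -> R) (a c k s t x T df dg : R).

Lemma is_derive_sumf n (F : 'I_n -> R -> R) x (dF : 'I_n -> R) :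
  (forall i, is_derive x 1 (F i) (dF i)) ->
  is_derive x 1 (fun y => \sum_(i < n) F i y) (\sum_(i < n) dF i).
Proof.
move=> dFi; have -> : (fun y => \sum_(i < n) F i y) = \sum_(i < n) F i.
  by apply/funext => y; rewrite fct_sumE.
exact: is_derive_sum.
Qed.

Lemma is_deriveBf f g x df dg : is_derive x 1 f df -> is_derive x 1 g dg ->
  is_derive x 1 (fun y => f y - g y) (df - dg).
Proof. exact: is_deriveB. Qed.

Lemma is_deriveZf (c : R) f x df : is_derive x 1 f df ->
  is_derive x 1 (fun y => c * f y) (c * df).
Proof. exact: is_deriveZ. Qed.

Lemma is_deriveMf f g x df dg : is_derive x 1 f df -> is_derive x 1 g dg ->
  is_derive x 1 (fun y => f y * g y) (f x * dg + g x * df).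
Proof. exact: is_deriveM. Qed.

Lemma is_deriveXf f (n : nat) x df : is_derive x 1 f df ->
  is_derive x 1 (fun y => f y ^+ n) (n%:R * f x ^+ n.-1 * df).
Proof.
move=> /(is_deriveX n); rewrite (_ : f ^+ n = (fun y => f y ^+ n)).
  by move/is_derive_eq; apply; rewrite /GRing.scale /= mulrC.
by apply/funext => y; rewrite exprfctE.
Qed.

Lemma is_derive_compf f g x df dg : is_derive (g x) 1 f df -> is_derive x 1 g dg ->
  is_derive x 1 (fun y => f (g y)) (df * dg).
Proof. exact: is_derive1_comp. Qed.

Lemma is_derive_unique (V : normedModType R) (F : V -> R) (v w : V) (d1 d2 : R) :
  is_derive v w F d1 -> is_derive v w F d2 -> d1 = d2.
Proof. by move=> [_ <-] [_ <-]. Qed.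

Lemma is_derive_along (V : normedModType R) (F : V -> R) (v w : V) (d : R) :
  is_derive (0 : R) 1 (fun h : R => F (h *: w + v)) d -> is_derive v w F d.
Proof.
move=> [dv dval].
have quotE : (fun h : R => h^-1 *: (((fun h : R => F (h *: w + v)) \o shift 0) (h *: 1)
                                     - F (0 *: w + v)))
           = (fun h : R => h^-1 *: ((F \o shift v) (h *: w) - F v)).
  by apply/funext => h /=; rewrite scale0r add0r addr0 /GRing.scale /= mulr1.
by split; [rewrite /derivable -quotE; exact: dv | rewrite /derive -quotE].
Qed.

Lemma is_derive_mx_entry m n (Y : R -> 'M[R]_(m, n)) x (dY : 'M[R]_(m, n)) i j :
  is_derive x 1 Y dY -> is_derive x 1 (fun s => Y s i j) (dY i j).
Proof.
move=> [dv dval].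
have quotE : (fun h : R => h^-1 *: (((fun s => Y s i j) \o shift x) (h *: 1) - Y x i j)) =
   (fun A : 'M[R]_(m, n) => A i j) \o (fun h : R => h^-1 *: ((Y \o shift x) (h *: 1) - Y x)).
  by apply/funext => h /=; rewrite !mxE.
have entry_cvg : (fun h : R => h^-1 *: (((fun s => Y s i j) \o shift x) (h *: 1) - Y x i j))
    @ 0^' --> dY i j.
  by rewrite quotE -dval; apply: continuous_cvg; [exact: coord_continuous | exact: dv].
by split; [apply/cvg_ex; exists (dY i j) | exact: cvg_lim].
Qed.

Lemma is_derive_continuous f x df : is_derive x 1 f df -> {for x, continuous f}.
Proof. by move=> [df_ex _]; apply/differentiable_continuous/derivable1_diffP. Qed.

Lemma is_derive_increment_le f (df : R -> R) (a b k : R) : a <= b ->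
  (forall x, a <= x <= b -> is_derive x 1 f (df x)) ->
  (forall x, a <= x <= b -> df x <= k) -> f b - f a <= k * (b - a).
Proof.
move=> ab fdf dfk.
have cf : {within `[a, b], continuous f}.
  by apply: derivable_within_continuous => x; rewrite in_itv /= => /fdf [].
have fdf' : forall x, x \in `]a, b[%R -> is_derive x 1 f (df x).
  by move=> x; rewrite in_itv /= => /andP[ax xb]; apply: fdf; rewrite !ltW.
have [c cab ->] := MVT_segment ab fdf' cf.
by apply: ler_wpM2r; [rewrite subr_ge0 | apply: dfk; move: cab; rewrite in_itv].
Qed.

Lemma is_derive0_const_pos f : (forall t, 0 < t -> is_derive t 1 f 0) ->
  forall a c, 0 < a -> 0 < c -> f a = f c.
Proof.
move=> f'0.
suff le_incr : forall a c, 0 < a -> a <= c -> f c - f a <= 0 /\ 0 <= f c - f a.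
  move=> a c a0 c0; case: (leP a c) => ac.
    by have := le_incr a c a0 ac; lra.
  by have := le_incr c a c0 (ltW ac); lra.
move=> a c a0 ac; have in_pos x : a <= x <= c -> 0 < x.
  by case/andP=> ax _; exact: lt_le_trans ax.
split.
  have := @is_derive_increment_le f (fun=> 0) a c 0 ac; rewrite mul0r.
  by apply=> // x /in_pos/f'0.
have := @is_derive_increment_le (fun s => - f s) (fun=> 0) a c 0 ac.
rewrite mul0r => dec; suff : - f c - - f a <= 0 by lra.
apply: dec => // x /in_pos/f'0/(is_deriveZf (-1)); rewrite mulr0.
by rewrite (_ : (fun y => -1 * f y) = (fun y => - f y)) //; apply/funext=> y; rewrite mulN1r.
Qed.

Lemma ge_of_continuous_left f (a T c : R) : {for T, continuous f} -> a < T ->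
  (forall s, a <= s < T -> c < f s) -> c <= f T.
Proof.
move=> fc aT fc_left; rewrite leNgt; apply/negP => fTc.
have [e /= e0 fe] := (nbhs_ballP _ _).1 (@cvgr_lt R R (nbhs T) _ f (f T) fc c fTc).
set s := T - Num.min e (T - a) / 2.
have m0 : 0 < Num.min e (T - a) by rewrite lt_min e0 subr_gt0.
have [me mT] : Num.min e (T - a) <= e /\ Num.min e (T - a) <= T - a.
  by rewrite !ge_min !lexx orbT.
have : f s < c by apply: fe; rewrite /ball /= /s opprB addrC subrK ger0_norm; lra.
have : c < f s by apply: fc_left; rewrite /s; apply/andP; split; lra.
lra.
Qed.

Lemma real_induction (P : R -> Prop) (t0 : R) :
  (forall T, t0 <= T -> (forall s, t0 <= s < T -> P s) -> P T) ->
  (forall T, t0 <= T -> P T -> exists2 e : R, 0 < e & forall s, T <= s < T + e -> P s) ->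
  forall t, t0 <= t -> P t.
Proof.
move=> closed open t1 t01; apply/not_notP => nP1.
set B := [set s | t0 <= s /\ ~ P s].
have hlb : has_lbound B by exists t0 => s [].
set T := inf B.
have T0 : t0 <= T by apply: lb_le_inf; [exists t1 | move=> s []].
have TB s : B s -> T <= s by move=> Bs; exact: ge_inf hlb s Bs.
have before s : t0 <= s < T -> P s.
  case/andP=> ts sT; apply/not_notP => nPs.
  by have := TB s (conj ts nPs); rewrite leNgt sT.
have [e e0 Pe] := open T T0 (closed T T0 before).
have : T + e <= T.
  apply: lb_le_inf; first by exists t1.
  move=> s [ts nPs]; rewrite leNgt; apply/negP => se.
  have Ts := TB s (conj ts nPs).
  by apply: nPs; apply: Pe; rewrite se Ts.
lra.
Qed.

End RealCalculus.

Lemma norm2_sqr (R : realType) n (v : 'cV[R]_n) : norm2 v ^+ 2 = \sum_i v i 0 ^+ 2.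
Proof. by rewrite /norm2 sqr_sqrtr // sumr_ge0 // => i _; exact: sqr_ge0. Qed.

Lemma sum_sqr_eq0 (R : realType) n (v : 'cV[R]_n) : \sum_i v i 0 ^+ 2 = 0 -> v = 0.
Proof.
move=> /eqP; rewrite psumr_eq0 => [/allP v0|i _]; last exact: sqr_ge0.
apply/matrixP => i j; rewrite ord1 mxE; apply/eqP.
by rewrite -sqrf_eq0; apply: v0; rewrite mem_index_enum.
Qed.

Section LossGradient.
Variables (R : realType) (M N L : nat) (A : 'M[R]_(M, N)) (b : 'cV[R]_M).
Hypothesis L_gt0 : (0 < L)%N.

Definition residual (x : 'cV[R]_N) (m : 'I_M) : R :=
  \sum_(j < N) A m j * x j 0 ^+ L - b m 0.

Definition loss_grad (x : 'cV[R]_N) (j : 'I_N) : R :=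
  x j 0 ^+ L.-1 * \sum_(m < M) A m j * residual x m.

Lemma lossE x : loss L A b x = (2 * L%:R)^-1 * \sum_m residual x m ^+ 2.
Proof.
rewrite /loss norm2_sqr; congr (_ * _); apply: eq_bigr => m _.
rewrite /residual !mxE; congr (_ ^+ 2); congr (_ - _).
by apply: eq_bigr => j _; rewrite !mxE.
Qed.

Lemma loss_ge0 x : 0 <= loss L A b x.
Proof.
rewrite lossE mulr_ge0 ?invr_ge0 ?mulr_ge0 ?ler0n //.
by apply: sumr_ge0 => m _; exact: sqr_ge0.
Qed.

Lemma sum_residual_sqr x : \sum_m residual x m ^+ 2 = 2 * L%:R * loss L A b x.
Proof.
have L0 : (L%:R : R) != 0 by rewrite pnatr_eq0 -lt0n.
by rewrite lossE mulrA mulfV ?mul1r // mulf_neq0.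
Qed.

Lemma is_derive_loss (Y : R -> 'cV[R]_N) (dY : 'I_N -> R) (t : R) :
  (forall j, is_derive t 1 (fun s => Y s j 0) (dY j)) ->
  is_derive t 1 (fun s => loss L A b (Y s)) (\sum_j loss_grad (Y t) j * dY j).
Proof.
move=> dYj; rewrite (_ : (fun s => _) = (fun s => (2 * L%:R)^-1 * \sum_m residual (Y s) m ^+ 2));
  last by apply/funext => s; rewrite lossE.
apply: is_derive_eq.
  apply/is_deriveZf/is_derive_sumf => m; apply/is_deriveXf/is_deriveBf.
  by apply: is_derive_sumf => j; apply/is_deriveZf/is_deriveXf.
have L0 : (L%:R : R) != 0 by rewrite pnatr_eq0 -lt0n.
have cancel2L (a c y d : R) : (2 * L%:R)^-1 * (2 * c * (a * (L%:R * y * d))) = a * c * y * d.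
  by field.
rewrite /loss_grad mulr_sumr.
under eq_bigr => m _ do rewrite subr0 /= expr1 mulr_sumr mulr_sumr.
under eq_bigr => m _ do under eq_bigr => j _ do rewrite cancel2L.
rewrite exchange_big; apply: eq_bigr => j _.
by rewrite mulr_sumr mulr_suml; apply: eq_bigr => m _; ring.
Qed.

Lemma wn_loss_grad_r (r : R) (u : 'cV[R]_N) gr :
  is_derive r 1 (fun s => wn_loss L A b s u) gr ->
  gr = \sum_j loss_grad (wn_x r u) j * (u j 0 / norm2 u).
Proof.
move=> /is_derive_unique; apply; apply: is_derive_loss => j.
rewrite (_ : (fun s => _) = (fun s : R => s / norm2 u * u j 0)).
  by apply: is_derive_eq; rewrite /GRing.scale /=; ring.
by apply/funext => s; rewrite mxE.
Qed.

Section GradU.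
Variables (r : R) (u : 'cV[R]_N) (i : 'I_N).
Hypothesis u_neq0 : norm2 u != 0.

(* Along the line [h *: e_i + u], the norm is [sqrt (S h)]. *)
Let S (h : R) := \sum_(k < N) (h * (k == i)%:R + u k 0) ^+ 2.

Let S_at0 : S 0 = norm2 u ^+ 2.
Proof. by rewrite norm2_sqr; apply: eq_bigr => k _; rewrite mul0r add0r. Qed.

Let S0 : Num.sqrt (S 0) = norm2 u.
Proof. by rewrite S_at0 sqrtr_sqr ger0_norm // sqrtr_ge0. Qed.

Let is_derive_S : is_derive (0 : R) 1 S (2 * u i 0).
Proof.
have dS k : is_derive (0 : R) 1 (fun h : R => (h * (k == i)%:R + u k 0) ^+ 2)
    (2 * u k 0 * (k == i)%:R).
  by apply: is_derive_eq; rewrite /GRing.scale /=; ring.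
apply: is_derive_eq (is_derive_sumf dS) _.
rewrite (bigD1 i) //= big1 ?addr0 => [|k /negbTE ->]; last by rewrite mulr0.
by rewrite eqxx mulr1.
Qed.

Let is_derive_norm : is_derive (0 : R) 1 (fun h => Num.sqrt (S h)) (u i 0 / norm2 u).
Proof.
have n0 : 0 < norm2 u by rewrite lt_def u_neq0 sqrtr_ge0.
have S_gt0 : 0 < S 0 by rewrite S_at0 exprn_gt0.
apply: is_derive_eq; first exact: is_derive_compf (is_derive1_sqrt S_gt0) is_derive_S.
by rewrite S0; field; rewrite gt_eqF.
Qed.

Lemma wn_loss_grad_u gu : is_grad (fun v => wn_loss L A b r v) u gu ->
  gu i 0 = \sum_j loss_grad (wn_x r u) j *
     (r * ((j == i)%:R / norm2 u - u j 0 * u i 0 / norm2 u ^+ 3)).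
Proof.
move=> /(_ i)/is_derive_unique; apply; apply: is_derive_along.
have line_entry j : is_derive (0 : R) 1 (fun h => wn_x r (h *: delta_mx i 0 + u) j 0)
    (r * ((j == i)%:R / norm2 u - u j 0 * u i 0 / norm2 u ^+ 3)).
  rewrite (_ : (fun h => _) = (fun h => r * (Num.sqrt (S h))^-1 * (h * (j == i)%:R + u j 0))).
    have dinv : is_derive (0 : R) 1 (fun h => (Num.sqrt (S h))^-1)
        (- (Num.sqrt (S 0)) ^- 2 *: (u i 0 / norm2 u)).
      by apply: (is_deriveV _ is_derive_norm); rewrite S0.
    have dlin : is_derive (0 : R) 1 (fun h : R => h * (j == i)%:R + u j 0) (j == i)%:R.
      by apply: is_derive_eq; rewrite /GRing.scale /=; ring.
    apply: is_derive_eq (is_deriveMf (is_deriveZf r dinv) dlin) _.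
    by rewrite S0 mul0r add0r /GRing.scale /=; field.
  apply/funext => h; rewrite /wn_x /norm2 !mxE eqxx andbT; congr (r / Num.sqrt _ * _).
  by apply: eq_bigr => k _; rewrite !mxE eqxx andbT.
by have := is_derive_loss line_entry; rewrite scale0r add0r.
Qed.

End GradU.

(* The loss is invariant under rescaling of [u], so its [u]-gradient is orthogonal to [u]. *)
Lemma wn_loss_grad_u_orthogonal (r : R) (u gu : 'cV[R]_N) :
  is_grad (fun v => wn_loss L A b r v) u gu -> \sum_i u i 0 * gu i 0 = 0.
Proof.
move=> grad_u; have [n0|n0] := eqVneq (norm2 u) 0.
  have /sum_sqr_eq0 -> : \sum_i u i 0 ^+ 2 = 0 by rewrite -norm2_sqr n0 expr0n.
  by apply: big1 => i _; rewrite mxE mul0r.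
under eq_bigr do rewrite (wn_loss_grad_u _ n0 grad_u) mulr_sumr.
rewrite exchange_big; apply: big1 => j _.
have delta_sum : \sum_i u i 0 * (j == i)%:R = u j 0.
  rewrite (bigD1 j) //= eqxx mulr1 big1 ?addr0 // => i /negbTE.
  by rewrite eq_sym => ->; rewrite mulr0.
set g := loss_grad (wn_x r u) j; set n := norm2 u.
transitivity (\sum_i (g * r / n * (u i 0 * (j == i)%:R) - g * r * u j 0 / n ^+ 3 * u i 0 ^+ 2)).
  by apply: eq_bigr => i _; ring.
by rewrite sumrB -!mulr_sumr delta_sum -norm2_sqr -/n; field.
Qed.

End LossGradient.

Section Barrier.
Variables (R : realType) (L : nat).
Hypothesis L_ge2 : (2 <= L)%N.

(* An antiderivative of [y ^- (L - 1)] on [y > 0]. *)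
Definition barrier (y : R) : R :=
  if L == 2%N then ln y else - ((L - 2)%:R)^-1 * (y ^+ (L - 2))^-1.

Let L_neq2E : L != 2%N -> exists k, L = k.+3.
Proof. by move=> L2; exists (L - 3)%N; move: L_ge2 L2; lia. Qed.

Lemma is_derive_barrier (y : R) : 0 < y -> is_derive y 1 barrier (y ^+ L.-1)^-1.
Proof.
move=> y0; have [L2|/L_neq2E [k Lk]] := eqVneq L 2%N.
  rewrite (_ : barrier = @ln R); last by apply/funext => x; rewrite /barrier L2.
  by rewrite L2 expr1; exact: is_derive1_ln.
rewrite (_ : barrier = (fun x => - (k.+1%:R)^-1 * (x ^+ k.+1)^-1)); last first.
  by apply/funext => x; rewrite /barrier Lk /= subSS subSS subn0.
have yk1 : y ^+ k.+1 != 0 by rewrite expf_neq0 // gt_eqF.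
have dinv := is_deriveV (f := fun x => x ^+ k.+1) yk1 (is_deriveXf k.+1 (is_derive_id y 1)).
apply: is_derive_eq (is_deriveZf _ dinv) _.
have yk : y ^+ k != 0 by rewrite expf_neq0 // gt_eqF.
have k1 : (k.+1%:R : R) != 0 by rewrite pnatr_eq0.
rewrite Lk /= !exprS expr0 /GRing.scale /= mulr1 -natr1 in k1 *.
by field; rewrite yk gt_eqF.
Qed.

Lemma barrier_le (y : R) : 0 < y -> barrier y <= y.
Proof.
move=> y0; rewrite /barrier; case: ifP => _; first exact/ltW/ln_sublinear.
apply: le_trans (ltW y0); rewrite mulNr oppr_le0.
by rewrite mulr_ge0 // invr_ge0 ?exprn_ge0 ?ltW.
Qed.

Lemma barrier_ge_away0 (K : R) :
  exists2 d : R, 0 < d & forall y, 0 < y -> - K <= barrier y -> d < y.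
Proof.
have [L2|/L_neq2E [k Lk]] := eqVneq L 2%N.
  exists (expR (- K - 1)) => [|y y0]; first exact: expR_gt0.
  rewrite /barrier L2 eqxx => Ky; rewrite ltNge; apply/negP => yd.
  have : ln y <= ln (expR (- K - 1)) by rewrite ler_ln // posrE expR_gt0.
  by rewrite expRK; lra.
set c : R := k.+1%:R * (`|K| + 1).
have k1 : (1 : R) <= k.+1%:R by rewrite ler1n.
have c1 : 1 <= c by rewrite /c; have := normr_ge0 K; nra.
have c0 : 0 < c by lra.
exists c^-1 => [|y y0]; first by rewrite invr_gt0.
rewrite /barrier Lk /= subSS subSS subn0 => Ky; rewrite ltNge; apply/negP => yc.
have y1 : y <= 1 by apply: le_trans yc _; rewrite invf_le1.
have yk_le : y ^+ k.+1 <= y.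
  by rewrite exprS -[leRHS]mulr1 ler_pM ?exprn_ge0 ?exprn_ile1 // ltW.
have c_le : c <= (y ^+ k.+1)^-1.
  rewrite -[c]invrK lef_pV2 ?posrE ?invr_gt0 ?exprn_gt0 //; exact: le_trans yk_le yc.
have : (k.+1%:R)^-1 * c <= (k.+1%:R)^-1 * (y ^+ k.+1)^-1.
  by rewrite ler_pM2l // invr_gt0; lra.
rewrite /c mulrA mulVf ?mul1r ?pnatr_eq0 //.
move: Ky; rewrite mulNr; set q := _ * _; have := ler_norm K; lra.
Qed.

End Barrier.

Section Lyapunov.
Variables (R : realType) (M N L : nat) (A : 'M[R]_(M, N)) (b : 'cV[R]_M) (z : 'cV[R]_N).
Hypothesis L_ge2 : (2 <= L)%N.
Hypothesis z_ge0 : forall j, 0 <= z j 0.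
Hypothesis Az : A *m z = b.
Implicit Type x : 'cV[R]_N.

Definition pos_on_supp x := forall j, z j 0 = 0 \/ 0 < x j 0.

Definition lyap_term (j : 'I_N) (y : R) := 2^-1 * y ^+ 2 - z j 0 * barrier L y.

Definition lyap x := \sum_j lyap_term j (x j 0).

Lemma pos_on_suppP x : (forall j, 0 < z j 0 -> 0 < x j 0) -> pos_on_supp x.
Proof.
move=> xz j; have [zj|zj] := ltP 0 (z j 0); first by right; exact: xz.
by left; apply/eqP; rewrite eq_le zj z_ge0.
Qed.

Lemma is_derive_lyap_term j (y : R) : z j 0 = 0 \/ 0 < y ->
  is_derive y 1 (lyap_term j) (y - z j 0 * (y ^+ L.-1)^-1).
Proof.
have dsq : is_derive y 1 (fun y => 2^-1 * y ^+ 2) y.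
  apply: is_derive_eq (is_deriveZf _ (is_deriveXf 2 (is_derive_id y 1))) _.
  by rewrite /= expr1 mulr1 mulrA mulVf ?mul1r // pnatr_eq0.
case => [z0|y0]; last exact: is_deriveBf dsq (is_deriveZf _ (is_derive_barrier L_ge2 y0)).
have -> : lyap_term j = (fun y => 2^-1 * y ^+ 2).
  by apply/funext => y'; rewrite /lyap_term z0 mul0r subr0.
by rewrite z0 mul0r subr0.
Qed.

Lemma lyap_term_ge j (y : R) : z j 0 = 0 \/ 0 < y -> - (2^-1 * z j 0 ^+ 2) <= lyap_term j y.
Proof.
rewrite /lyap_term; case => [->|y0].
  by rewrite mul0r subr0 expr0n /= mulr0 oppr0 mulr_ge0 ?sqr_ge0.
have : z j 0 * barrier L y <= z j 0 * y by rewrite ler_wpM2l ?barrier_le.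
by have := sqr_ge0 (y - z j 0); rewrite sqrrB; nra.
Qed.

Lemma lyap_ge x : pos_on_supp x -> - (\sum_j 2^-1 * z j 0 ^+ 2) <= lyap x.
Proof. by move=> xz; rewrite -sumrN; apply: ler_sum => j _; exact: lyap_term_ge. Qed.

Lemma is_derive_lyap (Y : R -> 'cV[R]_N) (t : R) (dY : 'I_N -> R) :
  (forall j, is_derive t 1 (fun s => Y s j 0) (dY j)) -> pos_on_supp (Y t) ->
  is_derive t 1 (fun s => lyap (Y s))
     (\sum_j (Y t j 0 - z j 0 * (Y t j 0 ^+ L.-1)^-1) * dY j).
Proof.
move=> dYj Yz; apply: is_derive_sumf => j.
exact: is_derive_compf (is_derive_lyap_term (Yz j)) (dYj j).
Qed.

(* Since [x_j - z_j x_j^(1-L)] times [x_j^(L-1)] is [x_j^L - z_j], the pairing collapses to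
   [(A x^L - A z) . residual x]. *)
Lemma lyap_grad_dot_loss_grad x : (0 < L)%N -> pos_on_supp x ->
  \sum_j (x j 0 - z j 0 * (x j 0 ^+ L.-1)^-1) * loss_grad L A b x j =
  \sum_m residual L A b x m ^+ 2.
Proof.
move=> L_gt0 xz; have L1 : L = L.-1.+1 by rewrite prednK.
have termE j : (x j 0 - z j 0 * (x j 0 ^+ L.-1)^-1) * loss_grad L A b x j =
    \sum_m (A m j * x j 0 ^+ L - A m j * z j 0) * residual L A b x m.
  rewrite /loss_grad mulrA.
  have -> : (x j 0 - z j 0 * (x j 0 ^+ L.-1)^-1) * x j 0 ^+ L.-1 = x j 0 ^+ L - z j 0.
    rewrite {3}L1 exprS; case: (xz j) => [->|xj]; first by rewrite !mul0r !subr0.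
    by rewrite mulrBl -mulrA mulVf ?mulr1 // expf_neq0 // gt_eqF.
  by rewrite mulr_sumr; apply: eq_bigr => m _; ring.
under eq_bigr do rewrite termE.
rewrite exchange_big; apply: eq_bigr => m _.
have Azm : \sum_j A m j * z j 0 = b m 0 by rewrite -Az mxE.
by rewrite -mulr_suml sumrB Azm /residual; ring.
Qed.

Lemma exists_supp : b != 0 -> exists j, 0 < z j 0.
Proof.
apply: contraNP => /forallNP zj0; apply/eqP; rewrite -Az.
suff -> : z = 0 by rewrite mulmx0.
apply/matrixP => i j; rewrite ord1 mxE; apply/eqP; rewrite eq_le z_ge0 andbT.
by rewrite leNgt; apply/negP => /(zj0 i).
Qed.

End Lyapunov.

Section ReparametrizedFlow.
Variables (R : realType) (M N L : nat) (A : 'M[R]_(M, N)) (b : 'cV[R]_M) (z : 'cV[R]_N).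
Hypothesis L_ge2 : (2 <= L)%N.
Hypothesis z_ge0 : forall j, 0 <= z j 0.
Hypothesis Az : A *m z = b.
Hypothesis b_neq0 : b != 0.
Variable Y : R -> 'cV[R]_N.
Hypothesis dY : forall t : R, 0 < t -> forall j,
  is_derive t 1 (fun s => Y s j 0) (- norm2 (Y t) ^+ 2 * loss_grad L A b (Y t) j).
Variable t0 : R.
Hypothesis t0_gt0 : 0 < t0.
Hypothesis Yt0_gt0 : forall j, 0 < Y t0 j 0.

Let L_gt0 : (0 < L)%N. Proof. exact: leq_trans L_ge2. Qed.

Lemma is_derive_lyap_path (t : R) : 0 < t -> pos_on_supp z (Y t) ->
  is_derive t 1 (fun s => lyap L z (Y s))
    (- norm2 (Y t) ^+ 2 * \sum_m residual L A b (Y t) m ^+ 2).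
Proof.
move=> t0' Yz; apply: is_derive_eq (is_derive_lyap L_ge2 (dY t0') Yz) _.
by rewrite -(lyap_grad_dot_loss_grad Az L_gt0 Yz) mulr_sumr; apply: eq_bigr => j _; ring.
Qed.

Lemma is_derive_loss_path (t : R) : 0 < t ->
  is_derive t 1 (fun s => loss L A b (Y s))
    (- norm2 (Y t) ^+ 2 * \sum_j loss_grad L A b (Y t) j ^+ 2).
Proof.
move=> t0'; apply: is_derive_eq (is_derive_loss A b L_gt0 (dY t0')) _.
by rewrite mulr_sumr; apply: eq_bigr => j _; ring.
Qed.

Lemma lyap_path_le (T : R) : t0 <= T -> (forall s, t0 <= s <= T -> pos_on_supp z (Y s)) ->
  lyap L z (Y T) <= lyap L z (Y t0).
Proof.
move=> t0T Yz; suff : lyap L z (Y T) - lyap L z (Y t0) <= 0 by lra.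
have := @is_derive_increment_le _ (fun s => lyap L z (Y s))
  (fun s => - norm2 (Y s) ^+ 2 * \sum_m residual L A b (Y s) m ^+ 2) t0 T 0 t0T.
rewrite mul0r; apply => [s st0T|s _].
  by apply: is_derive_lyap_path; [case/andP: st0T => /(lt_le_trans t0_gt0) | exact: Yz].
by rewrite mulNr oppr_le0 mulr_ge0 ?sqr_ge0 // sumr_ge0 // => m _; exact: sqr_ge0.
Qed.

Let Kz := \sum_j 2^-1 * z j 0 ^+ 2.

Let C := lyap L z (Y t0) + Kz.

Let C_ge0 : 0 <= C.
Proof.
have := lyap_ge L z_ge0 (pos_on_suppP z_ge0 (fun j _ => Yt0_gt0 j)).
by rewrite /C /Kz; lra.
Qed.

Section AwayFromZero.
Variable d : R.
Hypothesis d_gt0 : 0 < d.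
(* [z_j^-1 = 0] off the support of [z], so the sum only counts the support. *)
Hypothesis barrier_ge : forall y, 0 < y ->
  - (C * \sum_j (z j 0)^-1) <= barrier L y -> d < y.

Lemma supp_entry_gt_of_lyap_le (t : R) : pos_on_supp z (Y t) ->
  lyap L z (Y t) <= lyap L z (Y t0) -> forall j, 0 < z j 0 -> d < Y t j 0.
Proof.
move=> Yz lyapY j zj; have Yj : 0 < Y t j 0 by case: (Yz j) => // zj0; rewrite zj0 ltxx in zj.
apply: barrier_ge => //; set y := Y t j 0.
have term_le : lyap_term L z j y <= C.
  have rest : - (\sum_(k | k != j) 2^-1 * z k 0 ^+ 2)
      <= \sum_(k | k != j) lyap_term L z k (Y t k 0).
    by rewrite -sumrN; apply: ler_sum => k _; exact: lyap_term_ge.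
  move: lyapY; rewrite /C /Kz /lyap (bigD1 j) //= [X in _ -> _ <= _ + X](bigD1 j) //=.
  by have := sqr_ge0 (z j 0); have : (0 : R) <= 2^-1 by []; nra.
have zphi : - (z j 0 * barrier L y) <= C.
  by move: term_le; rewrite /lyap_term; have := sqr_ge0 y; have : (0 : R) <= 2^-1 by []; nra.
have zinv_le : (z j 0)^-1 <= \sum_k (z k 0)^-1.
  rewrite (bigD1 j) //= lerDl; apply: sumr_ge0 => k _; rewrite invr_ge0; exact: z_ge0.
have : - (z j 0 * barrier L y) * (z j 0)^-1 <= C * (z j 0)^-1.
  by rewrite ler_wpM2r // invr_ge0 ltW.
rewrite mulNr mulrAC divff ?mul1r ?gt_eqF //.
have : C * (z j 0)^-1 <= C * \sum_k (z k 0)^-1 by rewrite ler_wpM2l.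
lra.
Qed.

Lemma supp_entries_gt (t : R) : t0 <= t -> forall j, 0 < z j 0 -> d < Y t j 0.
Proof.
move: t; apply: (real_induction (P := fun s => forall j, 0 < z j 0 -> d < Y s j 0))
  => [T t0T before | T t0T PT].
  have T_gt0 : 0 < T by exact: lt_le_trans t0T.
  have YzT : pos_on_supp z (Y T).
    apply: (pos_on_suppP z_ge0) => j zj; have [<-|t0_ltT] := eqVneq t0 T; first exact: Yt0_gt0.
    have t0T' : t0 < T by rewrite lt_neqAle t0_ltT t0T.
    apply: lt_le_trans d_gt0 (ge_of_continuous_left (is_derive_continuous (dY T_gt0 j)) t0T' _).
    by move=> s /before; apply.
  suff lyapT : lyap L z (Y T) <= lyap L z (Y t0) by exact: supp_entry_gt_of_lyap_le YzT lyapT.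
  apply: lyap_path_le => // s /andP[t0s]; rewrite le_eqVlt => /orP[/eqP -> //|sT].
  by apply: (pos_on_suppP z_ge0) => j zj; apply: lt_trans d_gt0 _; apply: before; rewrite ?t0s.
have T_gt0 : 0 < T by exact: lt_le_trans t0T.
have near_T : \forall s \near T, forall j, 0 < z j 0 -> d < Y s j 0.
  apply: (@filter_forall _ _ (fun j s => 0 < z j 0 -> d < Y s j 0) _ (nbhs_filter T)) => j.
  have [zj|zj] := ltP 0 (z j 0); last exact: (nearW (nbhs_filter T)).
  apply: filterS (cvgr_gt _ (is_derive_continuous (dY T_gt0 j)) _ (PT j zj)).
  by move=> s ds _.
have [e /= e0 Pe] := (nbhs_ballP _ _).1 near_T.
exists e => // s /andP[Ts sTe]; apply: Pe.
by rewrite /ball /= ltr_distlC; apply/andP; split; lra.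
Qed.

Lemma pos_on_supp_path (t : R) : t0 <= t -> pos_on_supp z (Y t).
Proof.
by move=> t0t; apply: (pos_on_suppP z_ge0) => j zj; exact: lt_trans d_gt0 (supp_entries_gt t0t zj).
Qed.

Lemma sqnorm_path_ge (t : R) : t0 <= t -> d ^+ 2 <= norm2 (Y t) ^+ 2.
Proof.
move=> t0t; have [j zj] := exists_supp z_ge0 Az b_neq0.
have Yj := supp_entries_gt t0t zj.
rewrite norm2_sqr (bigD1 j) //= -[leLHS]addr0 lerD ?sumr_ge0 // => [|k _]; last exact: sqr_ge0.
by rewrite ler_pXn2r ?nnegrE ?ltW // (lt_trans d_gt0).
Qed.

Lemma loss_path_le (s t : R) : t0 <= s -> s <= t -> loss L A b (Y t) <= loss L A b (Y s).
Proof.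
move=> t0s st; suff : loss L A b (Y t) - loss L A b (Y s) <= 0 by lra.
have := @is_derive_increment_le _ (fun s => loss L A b (Y s))
  (fun s => - norm2 (Y s) ^+ 2 * \sum_j loss_grad L A b (Y s) j ^+ 2) s t 0 st.
rewrite mul0r; apply => [x /andP[sx _]|x _].
  by apply: is_derive_loss_path; apply: lt_le_trans sx; exact: lt_le_trans t0s.
by rewrite mulNr oppr_le0 mulr_ge0 ?sqr_ge0 // sumr_ge0 // => m _; exact: sqr_ge0.
Qed.

Lemma lyap_path_decrease (e : R) : 0 <= e -> (forall t, t0 <= t -> e <= loss L A b (Y t)) ->
  forall t, t0 <= t -> lyap L z (Y t) - lyap L z (Y t0) <= - (d ^+ 2 * (2 * L%:R * e)) * (t - t0).
Proof.
move=> e0 loss_ge t t0t.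
have := @is_derive_increment_le _ (fun s => lyap L z (Y s))
  (fun s => - norm2 (Y s) ^+ 2 * \sum_m residual L A b (Y s) m ^+ 2) t0 t _ t0t.
apply=> [s /andP[t0s _]|s /andP[t0s _]].
  by apply: is_derive_lyap_path; [exact: lt_le_trans t0s | exact: pos_on_supp_path].
rewrite sum_residual_sqr // mulNr lerN2.
have L0 : (0 : R) <= 2 * L%:R by rewrite mulr_ge0 ?ler0n.
by apply: ler_pM; rewrite ?sqr_ge0 ?mulr_ge0 ?sqnorm_path_ge ?ler_wpM2l ?loss_ge.
Qed.

Lemma loss_path_cvg0 : loss L A b (Y t) @[t --> +oo] --> 0.
Proof.
apply/cvgrPdist_lt => e e0.
have [[T [t0T lossT]]|loss_ge] := pselect (exists T, t0 <= T /\ loss L A b (Y T) < e).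
  exists T; split => [|t Tt]; first exact: num_real.
  rewrite sub0r normrN ger0_norm ?loss_ge0 //.
  by apply: le_lt_trans lossT; apply: loss_path_le => //; exact: ltW.
exfalso; have {}loss_ge t : t0 <= t -> e <= loss L A b (Y t).
  by move=> t0t; rewrite leNgt; apply/negP => lt_e; apply: loss_ge; exists t.
set k := d ^+ 2 * (2 * L%:R * e).
have k_gt0 : 0 < k by rewrite !mulr_gt0 ?exprn_gt0 ?ltr0n.
set t := t0 + (C + 1) / k.
have t0t : t0 <= t by rewrite lerDl divr_ge0 ?ltW //; have := C_ge0; lra.
have := lyap_path_decrease (ltW e0) loss_ge t0t.
have -> : - k * (t - t0) = - (C + 1) by rewrite /t; field; rewrite gt_eqF.
by have := lyap_ge L z_ge0 (pos_on_supp_path t0t); rewrite /C /Kz; lra.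
Qed.

End AwayFromZero.

Lemma reparametrized_loss_cvg0 : loss L A b (Y t) @[t --> +oo] --> 0.
Proof.
have [d d_gt0 barrier_ge] := barrier_ge_away0 L_ge2 (C * \sum_j (z j 0)^-1).
exact: loss_path_cvg0 d_gt0 barrier_ge.
Qed.

End ReparametrizedFlow.

Section WeightNormalizedFlow.
Variables (R : realType) (M N L : nat) (A : 'M[R]_(M, N)) (b : 'cV[R]_M).
Variables (r : R -> R) (u : R -> 'cV[R]_N).
Hypothesis L_gt0 : (0 < L)%N.
Hypothesis flow : forall t : R, 0 < t ->
  exists (gr : R) (gu : 'cV[R]_N),
    is_derive (r t) 1 (fun s => wn_loss L A b s (u t)) gr /\
    is_grad (fun v => wn_loss L A b (r t) v) (u t) gu /\
    is_derive t 1 r (- (r t ^+ 2 * gr)) /\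
    is_derive t 1 u (- gu).
Hypothesis r_cvg0 : r x @[x --> 0^'+] --> r 0.
Hypothesis u_cvg0 : u x @[x --> 0^'+] --> u 0.
Hypothesis r0_gt0 : 0 < r 0.
Hypothesis u0_gt0 : forall i, 0 < u 0 i 0.
Hypothesis norm_u0 : norm2 (u 0) = 1.

Let u_entry_cvg0 i : u x i 0 @[x --> 0^'+] --> u 0 i 0.
Proof. exact: continuous_cvg _ (@coord_continuous R N 1 i 0 (u 0)) u_cvg0. Qed.

Lemma wn_flow_norm_u (t : R) : 0 < t -> norm2 (u t) = 1.
Proof.
pose f s := \sum_i u s i 0 ^+ 2.
have f'0 (s : R) : 0 < s -> is_derive s 1 f 0.
  move=> s_gt0; have [gr [gu [_ [grad_u [_ du]]]]] := flow s_gt0.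
  apply: is_derive_eq (is_derive_sumf (fun i => is_deriveXf 2 (is_derive_mx_entry i 0 du))) _.
  transitivity (-2 * \sum_i u s i 0 * gu i 0).
    by rewrite mulr_sumr; apply: eq_bigr => i _; rewrite mxE /=; ring.
  by rewrite (wn_loss_grad_u_orthogonal L_gt0 grad_u) mulr0.
have f_const := is_derive0_const_pos f'0.
have f_cvg0 : f x @[x --> 0^'+] --> \sum_i u 0 i 0 ^+ 2.
  rewrite /f; apply: cvg_big => [|i _]; first exact: add_continuous.
  by under eq_cvg do rewrite expr2; rewrite expr2; apply: cvgM; exact: u_entry_cvg0.
rewrite -norm2_sqr norm_u0 expr1n in f_cvg0.
have f1 : f 1 = 1.
  apply: (cvg_unique _ _ f_cvg0) => //.
  apply: cvg_trans (near_eq_cvg _) (cvg_cst (f 1)).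
  by near=> x; apply: f_const => //; near: x; exact: nbhs_right_gt.
by move=> t_gt0; rewrite /norm2 -/(f t) (f_const t 1) // f1 sqrtr1.
Unshelve. all: by end_near.
Qed.

Lemma wn_flow_xE (t : R) : 0 < t -> wn_x (r t) (u t) = r t *: u t.
Proof. by move=> t_gt0; rewrite /wn_x wn_flow_norm_u // divr1. Qed.

Lemma is_derive_wn_flow_x (t : R) : 0 < t -> forall j,
  is_derive t 1 (fun s => (r s *: u s) j 0)
    (- norm2 (r t *: u t) ^+ 2 * loss_grad L A b (r t *: u t) j).
Proof.
move=> t_gt0 j; have [gr [gu [grad_r [grad_u [dr du]]]]] := flow t_gt0.
have nu := wn_flow_norm_u t_gt0.
rewrite (_ : (fun s => _) = (fun s => r s * u s j 0)); last by apply/funext => s; rewrite mxE.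
apply: is_derive_eq (is_deriveMf dr (is_derive_mx_entry j 0 du)) _.
have nu0 : norm2 (u t) != 0 by rewrite nu oner_eq0.
rewrite (wn_loss_grad_r L_gt0 grad_r) mxE (wn_loss_grad_u L_gt0 j nu0 grad_u) nu wn_flow_xE //.
have -> : norm2 (r t *: u t) ^+ 2 = r t ^+ 2.
  by rewrite norm2_sqr -[RHS]mulr1 -(expr1n _ 2) -nu norm2_sqr mulr_sumr;
    apply: eq_bigr => k _; rewrite mxE exprMn.
set G := loss_grad L A b (r t *: u t).
have delta_sum : \sum_k G k * (k == j)%:R = G j.
  by rewrite (bigD1 j) //= eqxx mulr1 big1 ?addr0 // => k /negbTE ->; rewrite mulr0.
set P := \sum_k G k * u t k 0.
have sum_r : \sum_k G k * (u t k 0 / 1) = P by apply: eq_bigr => k _; rewrite divr1.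
have sum_u : \sum_k G k * (r t * ((k == j)%:R / 1 - u t k 0 * u t j 0 / 1 ^+ 3)) =
    r t * G j - r t * u t j 0 * P.
  transitivity (\sum_k (r t * (G k * (k == j)%:R) - r t * u t j 0 * (G k * u t k 0))).
    by apply: eq_bigr => k _; rewrite expr1n !divr1; ring.
  by rewrite sumrB -!mulr_sumr delta_sum.
by rewrite sum_r sum_u; ring.
Qed.

Lemma wn_flow_x_pos : exists2 t0 : R, 0 < t0 & forall j, 0 < (r t0 *: u t0) j 0.
Proof.
have r_pos : \forall s \near 0^'+, 0 < r s by exact: cvgr_gt _ r_cvg0 _ r0_gt0.
have u_pos : \forall s \near 0^'+, forall j, 0 < u s j 0.
  apply: (@filter_forall R 'I_N (fun j s => 0 < u s j 0)) => j.
  have uj : u s j 0 @[s --> 0^'+] --> u 0 j 0 by exact: u_entry_cvg0.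
  exact: cvgr_gt _ uj _ (u0_gt0 j).
have PF : ProperFilter (0^'+ : set_system R) by exact: at_right_proper_filter.
have [t0 [t0_gt0 [rt0 ut0]]] := filter_ex (filterI (@nbhs_right_gt R 0) (filterI r_pos u_pos)).
by exists t0 => // j; rewrite mxE mulr_gt0.
Qed.

End WeightNormalizedFlow.

Unset Implicit Arguments.
Set Strict Implicit.

Theorem mainTheorem18 (R : realType) (M N L : nat)
  (A : 'M[R]_(M, N)) (b : 'cV[R]_M)
  (r : R -> R) (u : R -> 'cV[R]_N) :
  (2 <= L)%N ->
  b != 0 ->
  (exists z : 'cV[R]_N, (forall i, 0 <= z i 0) /\ A *m z = b) ->
  (* weight-normalized gradient flow with eta_r = r^2, eta_u = 1, for t > 0 *)
  (forall t : R, 0 < t ->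
     exists (gr : R) (gu : 'cV[R]_N),
       is_derive (r t) 1 (fun s => wn_loss L A b s (u t)) gr /\
       is_grad (fun v => wn_loss L A b (r t) v) (u t) gu /\
       is_derive t 1 r (- (r t ^+ 2 * gr)) /\
       is_derive t 1 u (- gu)) ->
  (* initial conditions (solution continuous at t = 0 from the right) *)
  r x @[x --> 0^'+] --> r 0 ->
  u x @[x --> 0^'+] --> u 0 ->
  0 < r 0 ->
  (forall i, 0 < u 0 i 0) ->
  norm2 (u 0) = 1 ->
  loss L A b (wn_x (r t) (u t)) @[t --> +oo] --> 0.
Proof.
move=> L_ge2 b_neq0 [z [z_ge0 Az]] flow r_cvg0 u_cvg0 r0_gt0 u0_gt0 norm_u0.
have L_gt0 : (0 < L)%N by exact: leq_trans L_ge2.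
have [t0 t0_gt0 x0_gt0] := wn_flow_x_pos r_cvg0 u_cvg0 r0_gt0 u0_gt0.
have dx := is_derive_wn_flow_x L_gt0 flow u_cvg0 norm_u0.
have xE := wn_flow_xE L_gt0 flow u_cvg0 norm_u0.
apply: cvg_trans (reparametrized_loss_cvg0 L_ge2 z_ge0 Az b_neq0 dx t0_gt0 x0_gt0).
apply: near_eq_cvg; exists 0; split => [|t t_gt0]; first exact: num_real.
by rewrite xE.
Qed.
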